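(* Let $\gamma\in(0,1]$, $\alpha>0$ and $N$ be such that $0<\lambda=1-\gamma/N^\alpha<1$. Then $$-\frac1N\sum_{i=1}^b\big[(J^T(s^* ))^{-1}\big]_{ii}\,\tilde f_i(s^* )\ge\frac{\lambda\gamma}{3N^{1+\alpha}}.$$
   Context: $b\ge1$ is an integer. The mean-field vector field is $f_k(s)=\lambda(s_{k-1}^2-s_k^2)-(s_k-s_{k+1})$, $k=1,\dots,b$, with $s_0=1,s_{b+1}=0$; $s^*$ is its unique equilibrium in $\{s\in\mathbb R^b:1\ge s_1\ge\cdots\ge s_b\ge0\}$. $J(s^* )$ is the $b\times b$ tridiagonal Jacobian of $f$ at $s^*$ with $J_{kk}=-2\lambda s^*_k-1$, $J_{k,k+1}=1$, $J_{k+1,k}=2\lambda s^*_k$ (invertible). $\tilde f_i(s)=\frac12[\lambda(s_{i-1}^2-s_i^2)+(s_i-s_{i+1})]$. In the paper, $[(J^T(s^* ))^{-1}]_{ii}=\nabla^2 g(s)_{ii}$ for the solution $g$ of Stein's equation $\nabla g(s)\cdot J(s^* )(s-s^* )=\|s-s^*\|^2$, and the lemma is stated for $s$ with $\|s-s^*\|^{2r}\le N^{-\epsilon}$; the quantity does not depend on $s$. *)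

From HB Require Import structures.
From mathcomp Require Import all_boot all_order all_algebra.
From mathcomp Require Import all_classical all_reals all_analysis.
Set Implicit Arguments. Unset Strict Implicit. Unset Printing Implicit Defensive.
Import Order.TTheory GRing.Theory Num.Theory.
Local Open Scope ring_scope.

(* Vectors s in R^b are column vectors 'cV[R]_b; the paper's coordinate s_k
   (k = 1..b) is  s (k-1) 0.  Paper indices are 1-based, ordinals 0-based:
   ordinal i : 'I_b  <->  paper index i+1. *)

(* Extended sequence: sext s 0 = s_0 = 1, sext s k = s_k for 1 <= k <= b,
   sext s k = 0 for k >= b+1 (in particular s_{b+1} = 0). *)
Definition sext (R : realType) (b : nat) (s : 'cV[R]_b) (k : nat) : R :=
  if k == 0%N then 1 else oapp (fun i : 'I_b => s i 0) 0 (insub k.-1).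

Definition fmf (R : realType) (b : nat) (lam : R) (s : 'cV[R]_b) (i : 'I_b) : R :=
  lam * (sext s i ^+ 2 - sext s i.+1 ^+ 2) - (sext s i.+1 - sext s i.+2).

Definition ftilde (R : realType) (b : nat) (lam : R) (s : 'cV[R]_b) (i : 'I_b) : R :=
  2^-1 * (lam * (sext s i ^+ 2 - sext s i.+1 ^+ 2) + (sext s i.+1 - sext s i.+2)).

Definition Jac (R : realType) (b : nat) (lam : R) (s : 'cV[R]_b) : 'M[R]_b :=
  \matrix_(i < b, j < b)
    if i == j then - (2 * lam * s i 0) - 1
    else if (j : nat) == i.+1 then 1
    else if (i : nat) == j.+1 then 2 * lam * s j 0
    else 0.

Definition is_equilibrium (R : realType) (b : nat) (lam : R) (s : 'cV[R]_b) : Prop :=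
  (forall k : nat, (1 <= k <= b)%N -> sext s k.+1 <= sext s k) /\
  (forall i : 'I_b, 0 <= s i 0) /\ (forall i : 'I_b, s i 0 <= 1) /\
  (forall i : 'I_b, fmf lam s i = 0).

(* Acting on row vectors, (wJ)_k = w_(k-1) - (2 lam s_k + 1) w_k + 2 lam s_k w_(k+1),
   so J obeys a discrete maximum principle: wJ >= 0 forces w <= 0.  Applied to
   the rows of J^-1 (whose products with J are unit vectors) this shows that J is
   invertible, that J^-1 <= 0 entrywise, and that -(J^-1)_ii (2 lam + 1) >= 1.
   At an equilibrium tilde f_i = s_i - s_(i+1) >= 0, so the sum telescopes to a
   bound by s_1 / (2 lam + 1); summing f_k = 0 gives s_1 = lam (1 - s_b^2), which
   is at least lam (1 - lam^2).  Since lam (1 - lam^2) / (2 lam + 1) >= lam (1 - lam) / 3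
   and 1 - lam = gamma / N^alpha, the claim follows. *)

From HB Require Import structures.
From mathcomp Require Import all_boot all_order all_algebra.
From mathcomp Require Import all_classical all_reals all_analysis.
From mathcomp Require Import ring lra zify.

Set Implicit Arguments.
Unset Strict Implicit.
Unset Printing Implicit Defensive.
Import Order.TTheory GRing.Theory Num.Theory.
Local Open Scope ring_scope.

Lemma sum_ord_telescope (V : zmodType) (f : nat -> V) (n : nat) :
  \sum_(i < n) (f i - f i.+1) = f 0%N - f n.
Proof.
rewrite -(big_mkord xpredT (fun i => f i - f i.+1)) -[RHS]opprB.
by rewrite -(telescope_sumr _ (leq0n n)) -sumrN; apply: eq_bigr => i _; rewrite opprB.
Qed.

Section Tridiagonal.
Variables (R : realType) (b : nat).

(* [rpad w k] is the paper's 1-based coordinate w_k, padded with w_0 = w_(b+1) = 0. *)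
Definition rpad (w : 'rV[R]_b) (k : nat) : R :=
  if k is k'.+1 then oapp (fun i : 'I_b => w 0 i) 0 (insub k') else 0.

Lemma rpad_ord (w : 'rV[R]_b) (i : 'I_b) : rpad w i.+1 = w 0 i.
Proof. by rewrite /rpad valK. Qed.

Lemma rpad_sum (w : 'rV[R]_b) (k : nat) :
  rpad w k = \sum_(j < b | j.+1 == k) w 0 j.
Proof.
rewrite big_mkcond; case: k => [|k] /=; first by rewrite big1.
case: insubP => [i _ <-|/negbTE out] /=.
  rewrite (bigD1 i) //= eqxx big1 ?addr0 // => j /negbTE neq_ji.
  by rewrite eqSS val_eqE neq_ji.
by rewrite big1 // => j _; case: eqP => // [[jk]]; rewrite -jk ltn_ord in out.
Qed.

Lemma rpad_le (w : 'rV[R]_b) (M : R) :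
  0 <= M -> (forall i, w 0 i <= M) -> forall k, rpad w k <= M.
Proof. by move=> M_ge0 w_le [|k] //=; case: insub => /=. Qed.

Variables (lam : R) (s : 'cV[R]_b).

Lemma mul_row_Jac (w : 'rV[R]_b) (k : 'I_b) :
  (w *m Jac lam s) 0 k =
  rpad w k - (2 * lam * s k 0 + 1) * w 0 k + 2 * lam * s k 0 * rpad w k.+2.
Proof.
have entry j : w 0 j * Jac lam s j k =
    (if j == k then - (2 * lam * s k 0 + 1) * w 0 j else 0)
  + (if j.+1 == k then w 0 j else 0)
  + (if j.+1 == k.+2 then 2 * lam * s k 0 * w 0 j else 0).
  rewrite /Jac mxE eqSS (eq_sym j.+1).
  have [-> | neq_jk] := eqVneq j k.
    by rewrite !(ltn_eqF (ltnSn k)); ring.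
  have [kj | _] := eqVneq (k : nat) j.+1.
    by rewrite (_ : (j == k.+1 :> nat) = false) ?kj; [ring | apply/eqP; lia].
  by case: ifP => _; ring.
rewrite mxE (eq_bigr _ (fun j _ => entry j)) !big_split /=.
rewrite -!big_mkcond big_pred1_eq -mulr_sumr -!rpad_sum /=; ring.
Qed.

Hypotheses (lam_ge0 : 0 <= lam) (s_ge0 : forall i, 0 <= s i 0).

(* If w attains a positive maximum M first at index k, then
   (wJ)_k <= w_(k-1) - (2 lam s_k + 1) M + 2 lam s_k M = w_(k-1) - M < 0. *)
Lemma Jac_max_principle (w : 'rV[R]_b) :
  (forall k, 0 <= (w *m Jac lam s) 0 k) -> forall k, w 0 k <= 0.
Proof.
move=> wJ_ge0 k; rewrite leNgt; apply/negP => wk_gt0.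
pose imax := [arg max_(i > k) w 0 i]%O.
have le_max j : w 0 j <= w 0 imax.
  by rewrite /imax; case: arg_maxP => // i _; apply.
have max_gt0 : 0 < w 0 imax by apply: lt_le_trans (le_max k).
have ex_max : exists n, (n < b)%N && (rpad w n.+1 == w 0 imax).
  by exists imax; rewrite ltn_ord rpad_ord eqxx.
case: (ex_minnP ex_max) => m /andP[m_lt /eqP wm_max] m_min.
have prev_lt : rpad w m < w 0 imax.
  case: m m_lt wm_max m_min => [|m] m_lt wm_max m_min //.
  rewrite lt_neqAle (rpad_le (ltW max_gt0) le_max) andbT.
  by apply/eqP => wm; have := m_min m; rewrite (ltnW m_lt) wm eqxx ltnn => /(_ isT).
pose km := Ordinal m_lt.
have next_le := rpad_le (ltW max_gt0) le_max km.+2.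
have c_ge0 : 0 <= 2 * lam * s km 0 by rewrite !mulr_ge0.
have := wJ_ge0 km; rewrite mul_row_Jac -rpad_ord wm_max.
move: (ler_wpM2l c_ge0 next_le); lra.
Qed.

Lemma Jac_unitmx : Jac lam s \in unitmx.
Proof.
rewrite unitmxE unitfE; apply/negP => /det0P[w w_neq0 wJ0].
have w_le0 k : w 0 k <= 0.
  by apply: Jac_max_principle => j; rewrite wJ0 mxE.
have wN_le0 k : - w 0 k <= 0.
  have := @Jac_max_principle (- w) _ k; rewrite mxE; apply=> j.
  by rewrite mulNmx wJ0 !mxE oppr0.
move/negP: w_neq0; apply; apply/eqP/rowP => j; apply/eqP.
by rewrite mxE eq_le w_le0 -oppr_le0 wN_le0.
Qed.

Lemma invmx_Jac_le0 i j : invmx (Jac lam s) i j <= 0.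
Proof.
have := @Jac_max_principle (row i (invmx (Jac lam s))) _ j; rewrite mxE; apply=> k.
by rewrite -row_mul mulVmx ?Jac_unitmx // !mxE ler0n.
Qed.

Lemma invmx_Jac_diag i : 1 <= - invmx (Jac lam s) i i * (2 * lam * s i 0 + 1).
Proof.
have rpad_le0 k : rpad (row i (invmx (Jac lam s))) k <= 0.
  by apply: rpad_le => // j; rewrite mxE invmx_Jac_le0.
have := mul_row_Jac (row i (invmx (Jac lam s))) i.
rewrite -row_mul mulVmx ?Jac_unitmx // !mxE eqxx mulr1n.
have c_ge0 : 0 <= 2 * lam * s i 0 by rewrite !mulr_ge0.
move: (rpad_le0 i) (mulr_ge0_le0 c_ge0 (rpad_le0 i.+2)); lra.
Qed.

Lemma invmx_Jac_diag_ge (s_le1 : forall i, s i 0 <= 1) i :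
  1 <= - invmx (Jac lam s) i i * (2 * lam + 1).
Proof.
apply: le_trans (invmx_Jac_diag i) _; rewrite ler_wpM2l ?oppr_ge0 ?invmx_Jac_le0 //.
by rewrite lerD2r -{2}[2 * lam]mulr1 ler_wpM2l ?mulr_ge0.
Qed.

End Tridiagonal.

Section Equilibrium.
Variables (R : realType) (b : nat) (lam : R) (s : 'cV[R]_b).

Lemma sext_out : sext s b.+1 = 0.
Proof. by rewrite /sext /=; case: insubP => //= j; rewrite ltnn. Qed.

Lemma sum_fmf :
  \sum_(i < b) fmf lam s i = lam * (1 - sext s b ^+ 2) - sext s 1.
Proof.
rewrite sumrB -mulr_sumr (sum_ord_telescope (fun k => sext s k ^+ 2)).
by rewrite (sum_ord_telescope (fun k => sext s k.+1)) sext_out expr1n subr0.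
Qed.

Lemma ftilde_fmf0 i : fmf lam s i = 0 -> ftilde lam s i = sext s i.+1 - sext s i.+2.
Proof. by rewrite /fmf /ftilde => /eqP; rewrite subr_eq0 => /eqP ->; field. Qed.

Hypotheses (lam_ge0 : 0 <= lam) (s_eq : is_equilibrium lam s).

Lemma sext_le_first k : (1 <= k <= b)%N -> sext s k <= sext s 1.
Proof.
have [s_mono _] := s_eq; elim: k => [//|[//|k] IHk] /andP[_ k_lt].
by apply: le_trans (s_mono k.+1 _) (IHk _); lia.
Qed.

Lemma sum_invJac_ftilde_ge :
  sext s 1 <= (2 * lam + 1) *
    - \sum_(i < b) (invmx (Jac lam s)^T) i i * ftilde lam s i.
Proof.
have [s_mono [s_ge0 [s_le1 s_fmf0]]] := s_eq.
have -> : sext s 1 = \sum_(i < b) (sext s i.+1 - sext s i.+2).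
  by rewrite (sum_ord_telescope (fun k => sext s k.+1)) sext_out subr0.
rewrite -sumrN mulr_sumr; apply: ler_sum => i _.
rewrite -trmx_inv mxE ftilde_fmf0 //.
set d := _ - _; have d_ge0 : 0 <= d by rewrite subr_ge0 s_mono // ltn_ord.
rewrite (_ : _ * - _ = - invmx (Jac lam s) i i * (2 * lam + 1) * d); last by ring.
exact: ler_peMl d_ge0 (invmx_Jac_diag_ge lam_ge0 s_ge0 s_le1 i).
Qed.

Lemma equilibrium_first_ge : (1 <= b)%N -> lam * (1 - lam ^+ 2) <= sext s 1.
Proof.
move=> b_ge1; have [_ [s_ge0 [_ s_fmf0]]] := s_eq.
have first_eq : sext s 1 = lam * (1 - sext s b ^+ 2).
  by apply/eqP; rewrite eq_sym -subr_eq0 -sum_fmf big1.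
have sb_ge0 : 0 <= sext s b.
  by rewrite /sext; case: ifP => // _; case: insub => /=.
have sb_le : sext s b <= sext s 1 by apply: sext_le_first; rewrite b_ge1 /=.
have first_le : sext s 1 <= lam.
  by rewrite first_eq ler_piMr // lerBlDr lerDl sqr_ge0.
have sb2_le : sext s b ^+ 2 <= lam ^+ 2.
  by rewrite ler_pXn2r ?nnegrE //; apply: le_trans sb_le first_le.
by rewrite first_eq ler_wpM2l // lerB.
Qed.

End Equilibrium.

Theorem lemma10 (R : realType) (b N : nat) (gamma alpha : R) (s : 'cV[R]_b) :
  (1 <= b)%N -> (0 < N)%N ->
  0 < gamma -> gamma <= 1 -> 0 < alpha ->
  let lam := 1 - gamma / (N%:R `^ alpha) in
  0 < lam -> lam < 1 ->
  is_equilibrium lam s ->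
  - (N%:R)^-1 * \sum_(i < b) (invmx (Jac lam s)^T) i i * ftilde lam s i
    >= lam * gamma / (3 * N%:R `^ (1 + alpha)).
Proof.
move=> b_ge1 N_gt0 _ _ _ lam lam_gt0 lam_lt1 s_eq.
set S := \sum_(i < b) _.
have S_le : lam * (1 - lam) / 3 <= - S.
  have lam_ge0 := ltW lam_gt0.
  have first_le := le_trans (equilibrium_first_ge lam_ge0 s_eq b_ge1)
                             (sum_invJac_ftilde_ge lam_ge0 s_eq).
  rewrite -(@ler_pM2l _ (2 * lam + 1)) ?ltr_wpDl ?mulr_ge0 //.
  apply: le_trans first_le; nra.
have Nr_gt0 : 0 < N%:R :> R by rewrite ltr0n.
have powN_gt0 : 0 < N%:R `^ alpha :> R by rewrite powR_gt0.
have -> : lam * gamma / (3 * N%:R `^ (1 + alpha)) = N%:R^-1 * (lam * (1 - lam) / 3).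
  rewrite powRD ?powRr1 ?ler0n ?(lt0r_neq0 Nr_gt0) ?implybT // /lam.
  by field; rewrite !lt0r_neq0.
by rewrite mulNr -mulrN ler_wpM2l // invr_ge0 ler0n.
Qed.
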